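(* Let $a>b>0$ and let $E$ be the ellipse $\frac{x^2}{a^2}+\frac{y^2}{b^2}=1$. Over the family of 3-periodic billiard orbits $T=P_1P_2P_3$ in $E$, the following three quantities are constant (independent of the orbit): (i) the sum $\cos\theta_1+\cos\theta_2+\cos\theta_3$ of the cosines of the interior angles $\theta_i$ of $T$; (ii) the product $|\cos\theta_1'\cos\theta_2'\cos\theta_3'|$ of the cosines of the interior angles $\theta_i'$ of the excentral triangle $T'$ of $T$; (iii) the ratio $A'/A$ of the area $A'$ of the excentral triangle $T'$ to the area $A$ of $T$.
   Context: A 3-periodic billiard orbit in the ellipse $E$ is a nondegenerate triangle $P_1P_2P_3$ with all vertices on $E$ such that at each vertex $P_i$ the normal line to $E$ at $P_i$ bisects the interior angle of the triangle at $P_i$. These orbits form a one-parameter family. The excentral triangle of a triangle is the triangle whose vertices are its three excenters (the intersections of pairs of exterior angle bisectors). *)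

From Stdlib Require Import Reals.
Open Scope R_scope.

Definition pt := (R * R)%type.

Definition vsub (P Q : pt) : pt := (fst P - fst Q, snd P - snd Q).
Definition vadd (P Q : pt) : pt := (fst P + fst Q, snd P + snd Q).
Definition vscale (k : R) (P : pt) : pt := (k * fst P, k * snd P).
Definition dot (u v : pt) : R := fst u * fst v + snd u * snd v.
Definition cross (u v : pt) : R := fst u * snd v - snd u * fst v.
Definition vnorm (u : pt) : R := sqrt (dot u u).
Definition unitv (u : pt) : pt := vscale (/ vnorm u) u.

Definition on_ellipse (a b : R) (P : pt) : Prop :=
  (fst P)^2 / a^2 + (snd P)^2 / b^2 = 1.
Definition ellipse_normal (a b : R) (P : pt) : pt :=
  (fst P / a^2, snd P / b^2).

Definition nondegenerate (P1 P2 P3 : pt) : Prop :=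
  cross (vsub P2 P1) (vsub P3 P1) <> 0.

Definition cos_angle (A B C : pt) : R :=
  dot (vsub B A) (vsub C A) / (vnorm (vsub B A) * vnorm (vsub C A)).

Definition int_bisector_dir (A B C : pt) : pt :=
  vadd (unitv (vsub B A)) (unitv (vsub C A)).
Definition ext_bisector_dir (A B C : pt) : pt :=
  vsub (unitv (vsub B A)) (unitv (vsub C A)).

Definition on_line (P d X : pt) : Prop := cross (vsub X P) d = 0.

Definition normal_bisects (a b : R) (A B C : pt) : Prop :=
  cross (ellipse_normal a b A) (int_bisector_dir A B C) = 0.

Definition billiard3 (a b : R) (P1 P2 P3 : pt) : Prop :=
  nondegenerate P1 P2 P3 /\
  on_ellipse a b P1 /\ on_ellipse a b P2 /\ on_ellipse a b P3 /\
  normal_bisects a b P1 P2 P3 /\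
  normal_bisects a b P2 P3 P1 /\
  normal_bisects a b P3 P1 P2.

Definition excentral (P1 P2 P3 J1 J2 J3 : pt) : Prop :=
  on_line P2 (ext_bisector_dir P2 P3 P1) J1 /\
  on_line P3 (ext_bisector_dir P3 P1 P2) J1 /\
  on_line P3 (ext_bisector_dir P3 P1 P2) J2 /\
  on_line P1 (ext_bisector_dir P1 P2 P3) J2 /\
  on_line P1 (ext_bisector_dir P1 P2 P3) J3 /\
  on_line P2 (ext_bisector_dir P2 P3 P1) J3.

Definition tri_area (P1 P2 P3 : pt) : R :=
  Rabs (cross (vsub P2 P1) (vsub P3 P1)) / 2.

(* Each of the three quantities is a function of the ratio r/R of the inradius to the
   circumradius of the orbit: sum cos(theta_i) = 1 + r/R (Carnot); the excentral angles are
   (pi - theta_i)/2, so the product of their cosines is prod sin(theta_i/2) = r/(4R); and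
   A'/A = 2R/r.  So it suffices to show that r/R is the same for all 3-periodic orbits.

   The map (x, y) |-> (x/a, y/b) sends the ellipse to the unit circle, P_i to p_i.  At P_i
   the normal (x_i/a^2, y_i/b^2) bisects the angle, and its dot products with P_j - P_i
   become -|p_j - p_i|^2 / 2; so the reflection law says that |p_i - p_j|^2 = k |P_i - P_j|
   for one k > 0 and all three sides.  Squaring this, each pair of vertices satisfies
   B(p_i, p_j) = h, where B(x, y) = (1 - e) x1 y1 + (1 + e) x2 y2, e = t (a^2 - b^2),
   h = 1 - t (a^2 + b^2) and t = k^2/4.  Thus p1 p2 p3 is a triangle inscribed in the unit
   circle that is self-polar for the conic B(x, x) = h, which forces 2 h + 1 = e^2: this
   determines t, hence h, from a and b.  Finally, the sides of the orbit being proportional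
   to the |p_i - p_j|^2, the inscribed angle theorem gives (r/R)^2 = 2 prod (1 + p_i.p_j),
   and this product equals h^2/2. *)

From Stdlib Require Import Reals Lra Psatz Nsatz.
Open Scope R_scope.

(** * Plane vectors *)

Definition lin (α β : R) (u v : pt) : pt := vadd (vscale α u) (vscale β v).

Definition sqdist (P Q : pt) : R := dot (vsub Q P) (vsub Q P).

Lemma dot_lin α β γ δ u v :
  dot (lin α β u v) (lin γ δ u v) = α * γ * dot u u + (α * δ + β * γ) * dot u v + β * δ * dot v v.
Proof. destruct u, v; unfold lin, dot, vadd, vscale; simpl; ring. Qed.

Lemma cross_lin α β γ δ u v :
  cross (lin α β u v) (lin γ δ u v) = (α * δ - β * γ) * cross u v.
Proof. destruct u, v; unfold lin, cross, vadd, vscale; simpl; ring. Qed.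

Lemma vsub_lin P α β γ δ u v :
  vsub (vadd P (lin α β u v)) (vadd P (lin γ δ u v)) = lin (α - γ) (β - δ) u v.
Proof. destruct P, u, v; unfold lin, vsub, vadd, vscale; simpl; f_equal; ring. Qed.

Lemma dot_comm u v : dot u v = dot v u.
Proof. unfold dot; ring. Qed.

Lemma cross_swap u v : cross v u = - cross u v.
Proof. destruct u, v; unfold cross; simpl; ring. Qed.

Lemma dot_self_ge0 u : 0 <= dot u u.
Proof. destruct u; unfold dot; simpl; nra. Qed.

Lemma vnorm_ge0 u : 0 <= vnorm u.
Proof. apply sqrt_pos. Qed.

Lemma vnorm_sq u : vnorm u ^ 2 = dot u u.
Proof. rewrite <- Rsqr_pow2. apply Rsqr_sqrt, dot_self_ge0. Qed.

Lemma lagrange_identity u v : dot u u * dot v v = dot u v ^ 2 + cross u v ^ 2.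
Proof. destruct u, v; unfold dot, cross; simpl; ring. Qed.

Lemma binet_cauchy n u v : dot n n * dot u v = dot n u * dot n v + cross n u * cross n v.
Proof. destruct n, u, v; unfold dot, cross; simpl; ring. Qed.

Lemma vnorm_pos_of_cross u v : cross u v <> 0 -> 0 < vnorm u.
Proof.
  intro huv. apply sqrt_lt_R0.
  destruct (dot_self_ge0 u) as [|hu]; [assumption|].
  pose proof (lagrange_identity u v) as hlag. pose proof (dot_self_ge0 v).
  assert (0 < cross u v * cross u v) by (apply Rsqr_pos_lt; assumption).
  rewrite <- hu in hlag. nra.
Qed.

Lemma vnorm_vsub_sym P Q : vnorm (vsub P Q) = vnorm (vsub Q P).
Proof. destruct P, Q; unfold vnorm, dot, vsub; simpl; f_equal; ring. Qed.

Lemma sqdist_sym P Q : sqdist P Q = sqdist Q P.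
Proof. destruct P, Q; unfold sqdist, dot, vsub; simpl; ring. Qed.

Lemma sqdist_pos_of_vnorm P Q : 0 < vnorm (vsub Q P) -> 0 < sqdist P Q.
Proof. intro h. unfold sqdist. rewrite <- vnorm_sq. apply pow_lt, h. Qed.

Lemma dot_vsub_self u v : dot (vsub v u) (vsub v u) = dot u u + dot v v - 2 * dot u v.
Proof. destruct u, v; unfold dot, vsub; simpl; ring. Qed.

Lemma sqdist_polarize P1 P2 P3 :
  sqdist P3 P1 + sqdist P1 P2 - sqdist P2 P3 = 2 * dot (vsub P2 P1) (vsub P3 P1).
Proof. destruct P1, P2, P3; unfold sqdist, dot, vsub; simpl; ring. Qed.

Lemma vsub_rebase P1 P2 P3 : vsub P3 P2 = vsub (vsub P3 P1) (vsub P2 P1).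
Proof. destruct P1, P2, P3; unfold vsub; simpl; f_equal; ring. Qed.

Lemma cross_vsub_rotate P1 P2 P3 :
  cross (vsub P3 P2) (vsub P1 P2) = cross (vsub P2 P1) (vsub P3 P1).
Proof. destruct P1, P2, P3; unfold cross, vsub; simpl; ring. Qed.

Lemma dot_unitv n w : 0 < vnorm w -> dot n (unitv w) = dot n w / vnorm w.
Proof. intro hw. destruct n, w; unfold unitv, dot, vscale; simpl. field. lra. Qed.

Lemma cross_unitv w z : 0 < vnorm w -> 0 < vnorm z ->
  cross (unitv w) (unitv z) = cross w z / (vnorm w * vnorm z).
Proof. intros hw hz. destruct w, z; unfold unitv, cross, vscale; simpl. field. lra. Qed.

Lemma dot_unitv_self w : 0 < vnorm w -> dot (unitv w) (unitv w) = 1.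
Proof.
  intro hw. pose proof (vnorm_sq w) as hsq. unfold unitv.
  set (l := vnorm w) in *. clearbody l.
  destruct w as [w1 w2]; unfold dot, vscale in *; cbn [fst snd] in *.
  transitivity ((w1 * w1 + w2 * w2) / l ^ 2); [field; lra|].
  rewrite <- hsq. field. lra.
Qed.

Lemma on_line_unique P Q d e X Y : cross d e <> 0 ->
  on_line P d X -> on_line Q e X -> on_line P d Y -> on_line Q e Y -> X = Y.
Proof.
  unfold on_line; destruct P as [p1 p2], Q as [q1 q2], d as [d1 d2], e as [e1 e2],
    X as [x1 x2], Y as [y1 y2].
  unfold cross, vsub; simpl; intros hde hX1 hX2 hY1 hY2.
  assert (hx : (x1 - y1) * (d1 * e2 - d2 * e1) =
    d1 * (((x1 - q1) * e2 - (x2 - q2) * e1) - ((y1 - q1) * e2 - (y2 - q2) * e1))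
    - e1 * (((x1 - p1) * d2 - (x2 - p2) * d1) - ((y1 - p1) * d2 - (y2 - p2) * d1))) by ring.
  assert (hy : (x2 - y2) * (d1 * e2 - d2 * e1) =
    d2 * (((x1 - q1) * e2 - (x2 - q2) * e1) - ((y1 - q1) * e2 - (y2 - q2) * e1))
    - e2 * (((x1 - p1) * d2 - (x2 - p2) * d1) - ((y1 - p1) * d2 - (y2 - p2) * d1))) by ring.
  rewrite hX1, hX2, hY1, hY2, Rminus_diag, !Rmult_0_r, Rminus_diag in hx, hy.
  destruct (Rmult_integral _ _ hx), (Rmult_integral _ _ hy); try contradiction.
  f_equal; lra.
Qed.

Lemma unit_bisector n e f : dot e e = 1 -> dot f f = 1 -> cross e f <> 0 ->
  cross n (vadd e f) = 0 -> dot n e = dot n f.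
Proof.
  intros he hf hef hn.
  assert (hs : 0 < vnorm (vadd e f)).
  { apply (vnorm_pos_of_cross _ f).
    replace (cross (vadd e f) f) with (cross e f) by (destruct e, f; unfold cross, vadd; simpl; ring).
    exact hef. }
  apply (Rmult_eq_reg_r (dot (vadd e f) (vadd e f)));
    [|rewrite <- vnorm_sq; apply pow_nonzero; lra].
  revert he hf hn. destruct n, e, f; unfold dot, cross, vadd; simpl. intros. nsatz.
Qed.

Lemma bisector_balance n w z : cross w z <> 0 ->
  cross n (vadd (unitv w) (unitv z)) = 0 -> dot n w * vnorm z = dot n z * vnorm w.
Proof.
  intros hwz hn.
  assert (hw : 0 < vnorm w) by exact (vnorm_pos_of_cross _ _ hwz).
  assert (hz : 0 < vnorm z) by (apply (vnorm_pos_of_cross _ w); rewrite cross_swap; lra).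
  assert (hu : cross (unitv w) (unitv z) <> 0).
  { rewrite cross_unitv by assumption.
    apply Rmult_integral_contrapositive; split; [exact hwz|].
    apply Rinv_neq_0_compat, Rmult_integral_contrapositive; lra. }
  pose proof (unit_bisector n _ _ (dot_unitv_self w hw) (dot_unitv_self z hz) hu hn) as heq.
  rewrite !dot_unitv in heq by assumption.
  apply (Rmult_eq_reg_r (/ (vnorm w * vnorm z))).
  - transitivity (dot n w / vnorm w); [field; lra|]. rewrite heq. field; lra.
  - apply Rinv_neq_0_compat, Rmult_integral_contrapositive; lra.
Qed.

(** * Triangles: the ratio r/R and the excentral triangle *)

(* r/R, by Heron's formula with r = area / semiperimeter and R = l1 l2 l3 / (4 area). *)
Definition rR_of_sides (l1 l2 l3 : R) : R :=
  (l2 + l3 - l1) * (l3 + l1 - l2) * (l1 + l2 - l3) / (2 * l1 * l2 * l3).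

Definition r_over_R (P1 P2 P3 : pt) : R :=
  rR_of_sides (vnorm (vsub P3 P2)) (vnorm (vsub P1 P3)) (vnorm (vsub P2 P1)).

(* The point with barycentric coordinates (-l1 : l2 : l3). *)
Definition excenter (P1 P2 P3 : pt) : pt :=
  let l1 := vnorm (vsub P3 P2) in
  let l2 := vnorm (vsub P1 P3) in
  let l3 := vnorm (vsub P2 P1) in
  vadd P1 (lin (l2 / (l2 + l3 - l1)) (l3 / (l2 + l3 - l1)) (vsub P2 P1) (vsub P3 P1)).

Lemma rR_of_sides_scale k l1 l2 l3 : k <> 0 -> l1 <> 0 -> l2 <> 0 -> l3 <> 0 ->
  rR_of_sides (k * l1) (k * l2) (k * l3) = rR_of_sides l1 l2 l3.
Proof. intros. unfold rR_of_sides. field. auto. Qed.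

Lemma nondegenerate_rotate P1 P2 P3 : nondegenerate P1 P2 P3 -> nondegenerate P2 P3 P1.
Proof. unfold nondegenerate; intro h; now rewrite cross_vsub_rotate. Qed.

Lemma side_pos P1 P2 P3 : nondegenerate P1 P2 P3 -> 0 < vnorm (vsub P2 P1).
Proof. apply vnorm_pos_of_cross. Qed.

Lemma side_lt_sum P1 P2 P3 : nondegenerate P1 P2 P3 ->
  vnorm (vsub P3 P2) < vnorm (vsub P1 P3) + vnorm (vsub P2 P1).
Proof.
  unfold nondegenerate; intro hc.
  pose proof (lagrange_identity (vsub P2 P1) (vsub P3 P1)) as hlag.
  pose proof (dot_vsub_self (vsub P2 P1) (vsub P3 P1)) as hcos.
  rewrite <- vsub_rebase, <- !vnorm_sq in hcos. rewrite <- !vnorm_sq in hlag.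
  assert (0 < cross (vsub P2 P1) (vsub P3 P1) * cross (vsub P2 P1) (vsub P3 P1))
    by (apply Rsqr_pos_lt; assumption).
  rewrite (vnorm_vsub_sym P1 P3).
  pose proof (vnorm_ge0 (vsub P3 P2)). pose proof (vnorm_ge0 (vsub P3 P1)).
  pose proof (vnorm_ge0 (vsub P2 P1)).
  set (l1 := vnorm (vsub P3 P2)) in *. set (l2 := vnorm (vsub P3 P1)) in *.
  set (l3 := vnorm (vsub P2 P1)) in *. set (d := dot (vsub P2 P1) (vsub P3 P1)) in *.
  assert (hd : - d < l2 * l3).
  { destruct (Rlt_or_le (- d) (l2 * l3)) as [|h]; [assumption|].
    assert (l2 * l3 * (l2 * l3) <= - d * - d) by (apply Rmult_le_compat; nra).
    nra. }
  assert (l1 * l1 < (l2 + l3) * (l2 + l3)) by nra.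
  nra.
Qed.

Lemma cos_angle_sq_eq A B C W :
  cross (vsub B A) (vsub C A) <> 0 ->
  dot (vsub B A) (vsub C A) ^ 2 = W * (dot (vsub B A) (vsub B A) * dot (vsub C A) (vsub C A)) ->
  cos_angle A B C ^ 2 = W.
Proof.
  intros hc hW. unfold cos_angle.
  assert (hB : 0 < vnorm (vsub B A)) by now apply (vnorm_pos_of_cross _ (vsub C A)).
  assert (hC : 0 < vnorm (vsub C A)).
  { apply (vnorm_pos_of_cross _ (vsub B A)). rewrite cross_swap. lra. }
  rewrite <- !vnorm_sq in hW.
  apply (Rmult_eq_reg_r ((vnorm (vsub B A) * vnorm (vsub C A)) ^ 2)).
  - transitivity (dot (vsub B A) (vsub C A) ^ 2); [field; lra|].
    rewrite hW; ring.
  - apply pow_nonzero. apply Rmult_integral_contrapositive. lra.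
Qed.

Lemma ext_bisector_dir_eq A B C : ext_bisector_dir A B C =
  vsub (vscale (/ vnorm (vsub B A)) (vsub B A)) (vscale (/ vnorm (vsub A C)) (vsub C A)).
Proof. unfold ext_bisector_dir, unitv. now rewrite (vnorm_vsub_sym C A). Qed.

Section Triangle.

Variables P1 P2 P3 : pt.
Hypothesis nondeg : nondegenerate P1 P2 P3.

Local Notation u := (vsub P2 P1).
Local Notation v := (vsub P3 P1).
Local Notation l1 := (vnorm (vsub P3 P2)).
Local Notation l2 := (vnorm (vsub P1 P3)).
Local Notation l3 := (vnorm (vsub P2 P1)).

Lemma sides_pos : 0 < l1 /\ 0 < l2 /\ 0 < l3.
Proof.
  pose proof (nondegenerate_rotate _ _ _ nondeg) as nondeg'.
  pose proof (nondegenerate_rotate _ _ _ nondeg') as nondeg''.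
  repeat split; eapply side_pos; eassumption.
Qed.

Lemma sides_lt_sum : 0 < l2 + l3 - l1 /\ 0 < l3 + l1 - l2 /\ 0 < l1 + l2 - l3.
Proof.
  pose proof (nondegenerate_rotate _ _ _ nondeg) as nondeg'.
  pose proof (nondegenerate_rotate _ _ _ nondeg') as nondeg''.
  pose proof (side_lt_sum _ _ _ nondeg).
  pose proof (side_lt_sum _ _ _ nondeg').
  pose proof (side_lt_sum _ _ _ nondeg'').
  lra.
Qed.

Lemma gram_sides :
  dot u u = l3 ^ 2 /\ dot v v = l2 ^ 2 /\ dot u v = (l2 ^ 2 + l3 ^ 2 - l1 ^ 2) / 2.
Proof.
  rewrite (vnorm_vsub_sym P1 P3), !vnorm_sq, (vsub_rebase P1 P2 P3), (dot_vsub_self u v).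
  repeat split; field.
Qed.

Lemma cos_angle_sides : cos_angle P1 P2 P3 = (l2 ^ 2 + l3 ^ 2 - l1 ^ 2) / (2 * l2 * l3).
Proof.
  destruct sides_pos as (h1 & h2 & h3). destruct gram_sides as (_ & _ & huv).
  unfold cos_angle. rewrite huv, (vnorm_vsub_sym P3 P1). field. lra.
Qed.

(* Opaque side lengths let [field] work on the coordinates of the points, which are
   otherwise hidden under square roots. *)
Ltac side_atoms :=
  destruct sides_pos as (h1 & h2 & h3); destruct sides_lt_sum as (s1 & s2 & s3);
  set (a1 := vnorm (vsub P3 P2)) in *; set (a2 := vnorm (vsub P1 P3)) in *;
  set (a3 := vnorm (vsub P2 P1)) in *; clearbody a1 a2 a3.

Lemma excenter_on_ext_bisectors :
  on_line P2 (ext_bisector_dir P2 P3 P1) (excenter P1 P2 P3) /\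
  on_line P3 (ext_bisector_dir P3 P1 P2) (excenter P1 P2 P3).
Proof.
  unfold on_line, excenter; cbv zeta; rewrite !ext_bisector_dir_eq.
  side_atoms.
  destruct P1, P2, P3; unfold cross, lin, vsub, vadd, vscale; simpl.
  split; field; lra.
Qed.

Lemma ext_bisectors_cross :
  cross (ext_bisector_dir P2 P3 P1) (ext_bisector_dir P3 P1 P2) =
  (l2 + l3 - l1) / (l1 * l2 * l3) * cross u v.
Proof.
  rewrite !ext_bisector_dir_eq. side_atoms.
  destruct P1, P2, P3; unfold cross, vsub, vscale; simpl.
  field; lra.
Qed.

Lemma excenter_unique J :
  on_line P2 (ext_bisector_dir P2 P3 P1) J -> on_line P3 (ext_bisector_dir P3 P1 P2) J ->
  J = excenter P1 P2 P3.
Proof.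
  intros hJ2 hJ3. destruct excenter_on_ext_bisectors as [hE2 hE3].
  assert (hcross : cross (ext_bisector_dir P2 P3 P1) (ext_bisector_dir P3 P1 P2) <> 0).
  { rewrite ext_bisectors_cross. side_atoms.
    apply Rmult_integral_contrapositive; split; [|exact nondeg].
    apply Rgt_not_eq, Rdiv_lt_0_compat; [lra|]. repeat apply Rmult_lt_0_compat; lra. }
  exact (on_line_unique _ _ _ _ _ _ hcross hJ2 hJ3 hE2 hE3).
Qed.

Lemma excenters_frame :
  excenter P1 P2 P3 = vadd P1 (lin (l2 / (l2 + l3 - l1)) (l3 / (l2 + l3 - l1)) u v) /\
  excenter P2 P3 P1 = vadd P1 (lin (- l2 / (l3 + l1 - l2)) (l3 / (l3 + l1 - l2)) u v) /\
  excenter P3 P1 P2 = vadd P1 (lin (l2 / (l1 + l2 - l3)) (- l3 / (l1 + l2 - l3)) u v).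
Proof.
  unfold excenter; cbv zeta. split; [reflexivity|]. side_atoms.
  destruct P1, P2, P3; unfold lin, vsub, vadd, vscale; simpl.
  split; f_equal; field; lra.
Qed.

Lemma excentral_cross :
  cross (vsub (excenter P2 P3 P1) (excenter P1 P2 P3))
        (vsub (excenter P3 P1 P2) (excenter P1 P2 P3)) =
  4 * l1 * l2 * l3 / ((l2 + l3 - l1) * (l3 + l1 - l2) * (l1 + l2 - l3)) * cross u v.
Proof.
  destruct excenters_frame as (-> & -> & ->).
  rewrite !vsub_lin, cross_lin. side_atoms. field; lra.
Qed.

Lemma excentral_nondegenerate :
  nondegenerate (excenter P1 P2 P3) (excenter P2 P3 P1) (excenter P3 P1 P2).
Proof.
  unfold nondegenerate. rewrite excentral_cross. side_atoms.
  apply Rmult_integral_contrapositive; split; [|exact nondeg].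
  apply Rgt_not_eq, Rdiv_lt_0_compat; repeat apply Rmult_lt_0_compat; lra.
Qed.

Lemma excentral_cos_sq :
  cos_angle (excenter P1 P2 P3) (excenter P2 P3 P1) (excenter P3 P1 P2) ^ 2 =
  (1 - cos_angle P1 P2 P3) / 2.
Proof.
  apply cos_angle_sq_eq; [exact excentral_nondegenerate|].
  rewrite cos_angle_sides. destruct gram_sides as (huu & hvv & huv).
  destruct excenters_frame as (-> & -> & ->).
  rewrite !vsub_lin, !dot_lin, huu, hvv, huv. side_atoms. field; lra.
Qed.

End Triangle.

Lemma excentral_excenters P1 P2 P3 J1 J2 J3 :
  nondegenerate P1 P2 P3 -> excentral P1 P2 P3 J1 J2 J3 ->
  J1 = excenter P1 P2 P3 /\ J2 = excenter P2 P3 P1 /\ J3 = excenter P3 P1 P2.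
Proof.
  intros nondeg (h1 & h1' & h2 & h2' & h3 & h3').
  pose proof (nondegenerate_rotate _ _ _ nondeg) as nondeg'.
  pose proof (nondegenerate_rotate _ _ _ nondeg') as nondeg''.
  repeat split; apply excenter_unique; assumption.
Qed.

Lemma r_over_R_pos P1 P2 P3 : nondegenerate P1 P2 P3 -> 0 < r_over_R P1 P2 P3.
Proof.
  intro nondeg. destruct (sides_pos _ _ _ nondeg) as (h1 & h2 & h3).
  destruct (sides_lt_sum _ _ _ nondeg) as (s1 & s2 & s3).
  unfold r_over_R, rR_of_sides.
  apply Rdiv_lt_0_compat; repeat apply Rmult_lt_0_compat; lra.
Qed.

Lemma cos_angle_sum P1 P2 P3 : nondegenerate P1 P2 P3 ->
  cos_angle P1 P2 P3 + cos_angle P2 P3 P1 + cos_angle P3 P1 P2 = 1 + r_over_R P1 P2 P3.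
Proof.
  intro nondeg.
  pose proof (nondegenerate_rotate _ _ _ nondeg) as nondeg'.
  pose proof (nondegenerate_rotate _ _ _ nondeg') as nondeg''.
  rewrite (cos_angle_sides _ _ _ nondeg), (cos_angle_sides _ _ _ nondeg'),
    (cos_angle_sides _ _ _ nondeg'').
  destruct (sides_pos _ _ _ nondeg) as (h1 & h2 & h3).
  unfold r_over_R, rR_of_sides. field. lra.
Qed.

Lemma excentral_cos_prod P1 P2 P3 J1 J2 J3 :
  nondegenerate P1 P2 P3 -> excentral P1 P2 P3 J1 J2 J3 ->
  Rabs (cos_angle J1 J2 J3 * cos_angle J2 J3 J1 * cos_angle J3 J1 J2) = r_over_R P1 P2 P3 / 4.
Proof.
  intros nondeg hex.
  pose proof (nondegenerate_rotate _ _ _ nondeg) as nondeg'.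
  pose proof (nondegenerate_rotate _ _ _ nondeg') as nondeg''.
  destruct (excentral_excenters _ _ _ _ _ _ nondeg hex) as (-> & -> & ->).
  pose proof (r_over_R_pos _ _ _ nondeg) as hpos.
  rewrite <- (Rabs_pos_eq (r_over_R P1 P2 P3 / 4)) by lra.
  apply Rsqr_eq_abs_0. rewrite !Rsqr_pow2, !Rpow_mult_distr.
  rewrite (excentral_cos_sq _ _ _ nondeg), (excentral_cos_sq _ _ _ nondeg'),
    (excentral_cos_sq _ _ _ nondeg'').
  rewrite (cos_angle_sides _ _ _ nondeg), (cos_angle_sides _ _ _ nondeg'),
    (cos_angle_sides _ _ _ nondeg'').
  destruct (sides_pos _ _ _ nondeg) as (h1 & h2 & h3).
  unfold r_over_R, rR_of_sides. field. lra.
Qed.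

Lemma excentral_area_ratio P1 P2 P3 J1 J2 J3 :
  nondegenerate P1 P2 P3 -> excentral P1 P2 P3 J1 J2 J3 ->
  tri_area J1 J2 J3 / tri_area P1 P2 P3 = 2 / r_over_R P1 P2 P3.
Proof.
  intros nondeg hex.
  destruct (excentral_excenters _ _ _ _ _ _ nondeg hex) as (-> & -> & ->).
  unfold tri_area. rewrite (excentral_cross _ _ _ nondeg), Rabs_mult.
  destruct (sides_pos _ _ _ nondeg) as (h1 & h2 & h3).
  destruct (sides_lt_sum _ _ _ nondeg) as (s1 & s2 & s3).
  rewrite Rabs_pos_eq by (apply Rlt_le, Rdiv_lt_0_compat; repeat apply Rmult_lt_0_compat; lra).
  pose proof (Rabs_pos_lt _ nondeg).
  unfold r_over_R, rR_of_sides. field. repeat split; lra.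
Qed.

(** * Triangles inscribed in the unit circle *)

Definition dscale (e : R) (p : pt) : pt := ((1 - e) * fst p, (1 + e) * snd p).

Lemma unit_dot_chord p q : dot p p = 1 -> dot q q = 1 -> dot p (vsub q p) = - sqdist p q / 2.
Proof. destruct p, q; unfold sqdist, dot, vsub; simpl; intros; lra. Qed.

Lemma inscribed_angle_sq p1 p2 p3 : dot p1 p1 = 1 -> dot p2 p2 = 1 -> dot p3 p3 = 1 ->
  2 * dot (vsub p2 p1) (vsub p3 p1) ^ 2 = sqdist p1 p2 * sqdist p1 p3 * (1 + dot p2 p3).
Proof. destruct p1, p2, p3; unfold sqdist, dot, vsub; simpl. intros. nsatz. Qed.

Lemma rR_of_chords_sq p1 p2 p3 :
  dot p1 p1 = 1 -> dot p2 p2 = 1 -> dot p3 p3 = 1 -> nondegenerate p1 p2 p3 ->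
  rR_of_sides (sqdist p2 p3) (sqdist p3 p1) (sqdist p1 p2) ^ 2 =
  2 * ((1 + dot p1 p2) * (1 + dot p1 p3) * (1 + dot p2 p3)).
Proof.
  intros hp1 hp2 hp3 nondeg.
  destruct (sides_pos _ _ _ nondeg) as (h1 & h2 & h3).
  apply sqdist_pos_of_vnorm in h1, h2, h3.
  pose proof (inscribed_angle_sq _ _ _ hp1 hp2 hp3) as e1.
  pose proof (inscribed_angle_sq _ _ _ hp2 hp3 hp1) as e2.
  pose proof (inscribed_angle_sq _ _ _ hp3 hp1 hp2) as e3.
  rewrite (sqdist_sym p1 p3) in e1. rewrite (sqdist_sym p2 p1), (dot_comm p3 p1) in e2.
  rewrite (sqdist_sym p3 p2) in e3.
  unfold rR_of_sides.
  rewrite (sqdist_polarize p1 p2 p3), (sqdist_polarize p2 p3 p1), (sqdist_polarize p3 p1 p2).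
  transitivity ((2 * dot (vsub p2 p1) (vsub p3 p1) ^ 2) * (2 * dot (vsub p3 p2) (vsub p1 p2) ^ 2)
    * (2 * dot (vsub p1 p3) (vsub p2 p3) ^ 2) * 2 / (sqdist p2 p3 * sqdist p3 p1 * sqdist p1 p2) ^ 2).
  - field. lra.
  - rewrite e1, e2, e3. field. lra.
Qed.

(* The three relations say that each side of the triangle [p1 p2 p3] lies on the polar
   of the opposite vertex with respect to the conic [dot (dscale e x) x = h]: the triangle
   is self-polar for that conic and inscribed in the unit circle, and such a triangle
   exists only if [2 h + 1 - e^2 = 0]. *)
Lemma self_polar_closure e h p1 p2 p3 :
  dot p1 p1 = 1 -> dot p2 p2 = 1 -> dot p3 p3 = 1 -> nondegenerate p1 p2 p3 ->
  dot (dscale e p1) p2 = h -> dot (dscale e p1) p3 = h -> dot (dscale e p2) p3 = h ->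
  2 * h + 1 - e * e = 0.
Proof.
  unfold nondegenerate. intros hp1 hp2 hp3 hc h12 h13 h23.
  apply (Rmult_eq_reg_r (cross (vsub p2 p1) (vsub p3 p1) * cross (vsub p2 p1) (vsub p3 p1)));
    [|apply Rmult_integral_contrapositive; auto].
  rewrite Rmult_0_l, <- Rmult_assoc. revert hp1 hp2 hp3 h12 h13 h23.
  destruct p1, p2, p3; unfold dscale, dot, cross, vsub; simpl. intros. nsatz.
Qed.

Lemma unit_chord_cross n p q h :
  dot p p = 1 -> dot q q = 1 -> dot n p = h -> dot n q = h -> sqdist p q <> 0 ->
  cross n q = - cross n p.
Proof.
  intros hp hq hnp hnq hpq.
  apply (Rmult_eq_reg_r (sqdist p q)); [|exact hpq].
  revert hp hq hnp hnq. destruct n, p, q; unfold sqdist, dot, cross, vsub; simpl. intros. nsatz.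
Qed.

Lemma dscale_vertex_identity e h p : dot p p = 1 -> 2 * h + 1 - e * e = 0 ->
  let n := dscale e p in
  4 * ((dot n n + h * dot n p) ^ 2 - cross n p ^ 2 * (dot n n - h ^ 2)) = dot n n ^ 3.
Proof. destruct p; unfold dscale, dot, cross; simpl. intros. nsatz. Qed.

(* With [n := dscale e p1], [binet_cauchy] writes [|n|^2 (p_i . p_j)] in terms of
   [n . p_i] and [cross n p_i]; here [n . p2 = n . p3 = h] and [cross n p3 = - cross n p2]. *)
Lemma self_polar_product e h p1 p2 p3 :
  dot p1 p1 = 1 -> dot p2 p2 = 1 -> dot p3 p3 = 1 -> sqdist p2 p3 <> 0 ->
  dot (dscale e p1) p2 = h -> dot (dscale e p1) p3 = h -> 2 * h + 1 - e * e = 0 -> h <> 0 ->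
  (1 + dot p1 p2) * (1 + dot p1 p3) * (1 + dot p2 p3) = h * h / 2.
Proof.
  intros hp1 hp2 hp3 hp23 h12 h13 hclose hh.
  set (n := dscale e p1) in *.
  pose proof (unit_chord_cross n p2 p3 h hp2 hp3 h12 h13 hp23) as hg3.
  pose proof (lagrange_identity n p2) as hN. rewrite hp2, h12 in hN.
  pose proof (binet_cauchy n p2 p3) as b23. rewrite h12, h13, hg3 in b23.
  pose proof (binet_cauchy n p1 p2) as b12. rewrite h12 in b12.
  pose proof (binet_cauchy n p1 p3) as b13. rewrite h13, hg3 in b13.
  pose proof (dscale_vertex_identity e h p1 hp1 hclose) as hv. cbv zeta in hv. fold n in hv.
  assert (hNpos : 0 < dot n n).
  { pose proof (pow2_ge_0 (cross n p2)).
    assert (0 < h ^ 2) by (rewrite <- Rsqr_pow2; apply Rsqr_pos_lt; exact hh).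
    lra. }
  apply (Rmult_eq_reg_l (2 * (dot n n * dot n n * dot n n)));
    [|apply Rgt_not_eq; repeat apply Rmult_lt_0_compat; lra].
  replace (2 * (dot n n * dot n n * dot n n) * (h * h / 2))
    with (dot n n * dot n n * dot n n * (h * h)) by field.
  set (N := dot n n) in *. set (d := dot n p1) in *.
  set (g1 := cross n p1) in *. set (g2 := cross n p2) in *. simpl in hv, hN.
  clearbody N d g1 g2. clear - hN b23 b12 b13 hv. nsatz.
Qed.

(** * Billiard orbits in the ellipse *)

Definition to_circle (a b : R) (P : pt) : pt := (fst P / a, snd P / b).

Definition closing_root (S C : R) : R := 3 / (S + sqrt (S ^ 2 + 3 * C ^ 2)).

Definition billiard_r_over_R (a b : R) : R :=
  Rabs (1 - closing_root (a * a + b * b) (a * a - b * b) * (a * a + b * b)).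

Lemma closing_root_unique S C t : 0 < S -> 0 < t ->
  C ^ 2 * t ^ 2 + 2 * S * t = 3 -> t = closing_root S C.
Proof.
  intros hS ht hroot. unfold closing_root.
  set (r := sqrt (S ^ 2 + 3 * C ^ 2)).
  assert (hr : 0 <= r) by apply sqrt_pos.
  assert (hr2 : r ^ 2 = S ^ 2 + 3 * C ^ 2)
    by (apply pow2_sqrt; pose proof (pow2_ge_0 S); pose proof (pow2_ge_0 C); lra).
  assert (hrt : r * t = 3 - S * t).
  { apply Rsqr_inj; [nra | pose proof (pow2_ge_0 (C * t)); nra |].
    rewrite !Rsqr_pow2. nra. }
  field_simplify_eq; nra.
Qed.

Section Ellipse.

Variables a b : R.
Hypotheses (ha : a <> 0) (hb : b <> 0).

Lemma to_circle_unit P : on_ellipse a b P -> dot (to_circle a b P) (to_circle a b P) = 1.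
Proof.
  unfold on_ellipse, to_circle, dot; simpl. intro hP. rewrite <- hP. field. auto.
Qed.

Lemma ellipse_normal_dot P Q :
  dot (ellipse_normal a b P) (vsub Q P) =
  dot (to_circle a b P) (vsub (to_circle a b Q) (to_circle a b P)).
Proof. destruct P, Q; unfold ellipse_normal, to_circle, dot, vsub; simpl. field. auto. Qed.

Lemma cross_to_circle P1 P2 P3 :
  cross (vsub (to_circle a b P2) (to_circle a b P1)) (vsub (to_circle a b P3) (to_circle a b P1)) =
  cross (vsub P2 P1) (vsub P3 P1) / (a * b).
Proof. destruct P1, P2, P3; unfold to_circle, cross, vsub; simpl. field. auto. Qed.

Lemma nondegenerate_to_circle P1 P2 P3 : nondegenerate P1 P2 P3 ->
  nondegenerate (to_circle a b P1) (to_circle a b P2) (to_circle a b P3).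
Proof.
  unfold nondegenerate. intro nondeg. rewrite cross_to_circle.
  apply Rmult_integral_contrapositive; split; [exact nondeg|].
  apply Rinv_neq_0_compat, Rmult_integral_contrapositive; auto.
Qed.

Lemma sqdist_from_circle P Q :
  let d := vsub (to_circle a b Q) (to_circle a b P) in
  sqdist P Q = a * a * (fst d * fst d) + b * b * (snd d * snd d).
Proof. destruct P, Q; unfold sqdist, to_circle, dot, vsub; simpl. field. auto. Qed.

Lemma sqdist_to_circle_pos P Q : 0 < sqdist P Q -> 0 < sqdist (to_circle a b P) (to_circle a b Q).
Proof.
  rewrite sqdist_from_circle. unfold sqdist.
  destruct (vsub (to_circle a b Q) (to_circle a b P)) as [d1 d2]; unfold dot; simpl.
  intro hpos. destruct (Req_dec d1 0), (Req_dec d2 0); [subst; lra| | |]; nra.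
Qed.

Lemma ellipse_chord_conic t P Q :
  on_ellipse a b P -> on_ellipse a b Q ->
  let p := to_circle a b P in let q := to_circle a b Q in
  sqdist p q <> 0 -> sqdist p q * sqdist p q = 4 * t * sqdist P Q ->
  dot (dscale (t * (a * a - b * b)) p) q = 1 - t * (a * a + b * b).
Proof.
  intros hP hQ p q hpq hchord.
  pose proof (to_circle_unit P hP) as hp. pose proof (to_circle_unit Q hQ) as hq. fold p q in hp, hq.
  rewrite (sqdist_from_circle P Q) in hchord. fold p q in hchord. clearbody p q.
  apply Rminus_diag_uniq, (Rmult_eq_reg_r (sqdist p q)); [|exact hpq].
  rewrite Rmult_0_l. revert hp hq hchord.
  destruct p, q; unfold sqdist, dscale, dot, vsub; simpl. intros. nsatz.
Qed.

Lemma closure_parameters t : 0 < t ->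
  2 * (1 - t * (a * a + b * b)) + 1 - t * (a * a - b * b) * (t * (a * a - b * b)) = 0 ->
  t = closing_root (a * a + b * b) (a * a - b * b) /\ 1 - t * (a * a + b * b) <> 0.
Proof.
  intros ht hclose. split.
  - apply closing_root_unique; [|assumption|nra].
    pose proof (Rsqr_pos_lt a ha). unfold Rsqr in *. nra.
  - intro h0.
    assert (hab : t * t * (4 * (a * a * (b * b))) = 0) by nra.
    repeat (apply Rmult_integral in hab as [hab|hab]); lra.
Qed.

Lemma billiard_vertex_balance A B C :
  on_ellipse a b A -> on_ellipse a b B -> on_ellipse a b C -> nondegenerate A B C ->
  normal_bisects a b A B C ->
  sqdist (to_circle a b A) (to_circle a b B) * vnorm (vsub C A) =
  sqdist (to_circle a b A) (to_circle a b C) * vnorm (vsub B A).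
Proof.
  intros hA hB hC nondeg hbis.
  pose proof (bisector_balance _ _ _ nondeg hbis) as hbal.
  rewrite !ellipse_normal_dot, !unit_dot_chord in hbal by (apply to_circle_unit; assumption).
  lra.
Qed.

Lemma billiard3_chords_proportional P1 P2 P3 : billiard3 a b P1 P2 P3 ->
  let p1 := to_circle a b P1 in let p2 := to_circle a b P2 in let p3 := to_circle a b P3 in
  exists k, 0 < k /\ sqdist p2 p3 = k * vnorm (vsub P3 P2) /\
    sqdist p3 p1 = k * vnorm (vsub P1 P3) /\ sqdist p1 p2 = k * vnorm (vsub P2 P1).
Proof.
  intros (nondeg & h1 & h2 & h3 & hbis1 & hbis2 & _) p1 p2 p3.
  pose proof (nondegenerate_rotate _ _ _ nondeg) as nondeg'.
  pose proof (billiard_vertex_balance _ _ _ h1 h2 h3 nondeg hbis1) as hbal1.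
  pose proof (billiard_vertex_balance _ _ _ h2 h3 h1 nondeg' hbis2) as hbal2.
  fold p1 p2 p3 in hbal1, hbal2.
  rewrite (vnorm_vsub_sym P3 P1), (sqdist_sym p1 p3) in hbal1.
  rewrite (vnorm_vsub_sym P1 P2), (sqdist_sym p2 p1) in hbal2.
  destruct (sides_pos _ _ _ nondeg) as (l1 & l2 & l3).
  assert (hq : 0 < sqdist p1 p2) by (apply sqdist_to_circle_pos, sqdist_pos_of_vnorm, l3).
  exists (sqdist p1 p2 / vnorm (vsub P2 P1)).
  split; [apply Rdiv_lt_0_compat; assumption|].
  repeat split; apply (Rmult_eq_reg_r (vnorm (vsub P2 P1))); try lra; field_simplify; lra.
Qed.

Lemma billiard3_self_polar P1 P2 P3 : billiard3 a b P1 P2 P3 ->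
  let p1 := to_circle a b P1 in let p2 := to_circle a b P2 in let p3 := to_circle a b P3 in
  exists t, 0 < t /\
    r_over_R P1 P2 P3 = rR_of_sides (sqdist p2 p3) (sqdist p3 p1) (sqdist p1 p2) /\
    let e := t * (a * a - b * b) in let h := 1 - t * (a * a + b * b) in
    dot (dscale e p1) p2 = h /\ dot (dscale e p1) p3 = h /\ dot (dscale e p2) p3 = h.
Proof.
  intro hbil. pose proof hbil as (nondeg & h1 & h2 & h3 & _).
  intros p1 p2 p3.
  destruct (billiard3_chords_proportional _ _ _ hbil) as (k & hk & q23 & q31 & q12).
  fold p1 p2 p3 in q23, q31, q12.
  destruct (sides_pos _ _ _ nondeg) as (l1 & l2 & l3).
  exists (k * k / 4). split; [nra|]. split.
  { unfold r_over_R. rewrite q23, q31, q12, rR_of_sides_scale; lra. }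
  assert (hchord : forall P Q, on_ellipse a b P -> on_ellipse a b Q ->
    sqdist (to_circle a b P) (to_circle a b Q) = k * vnorm (vsub Q P) -> 0 < vnorm (vsub Q P) ->
    dot (dscale (k * k / 4 * (a * a - b * b)) (to_circle a b P)) (to_circle a b Q) =
    1 - k * k / 4 * (a * a + b * b)).
  { intros P Q hP hQ hPQ hl. apply ellipse_chord_conic; [assumption..| |].
    - rewrite hPQ. apply Rgt_not_eq, Rmult_lt_0_compat; assumption.
    - rewrite hPQ. unfold sqdist. rewrite <- vnorm_sq. field. }
  rewrite (sqdist_sym p3 p1), (vnorm_vsub_sym P1 P3) in q31.
  rewrite (vnorm_vsub_sym P1 P3) in l2.
  repeat split; apply hchord; assumption.
Qed.

Lemma billiard3_r_over_R P1 P2 P3 : billiard3 a b P1 P2 P3 ->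
  r_over_R P1 P2 P3 = billiard_r_over_R a b.
Proof.
  intro hbil. pose proof hbil as (nondeg & h1 & h2 & h3 & _).
  destruct (billiard3_self_polar _ _ _ hbil) as (t & ht & hrR & h12 & h13 & h23).
  pose proof (nondegenerate_to_circle _ _ _ nondeg) as hcirc.
  set (p1 := to_circle a b P1) in *. set (p2 := to_circle a b P2) in *.
  set (p3 := to_circle a b P3) in *.
  pose proof (to_circle_unit _ h1) as hp1. pose proof (to_circle_unit _ h2) as hp2.
  pose proof (to_circle_unit _ h3) as hp3. fold p1 in hp1. fold p2 in hp2. fold p3 in hp3.
  pose proof (self_polar_closure _ _ _ _ _ hp1 hp2 hp3 hcirc h12 h13 h23) as hclose.
  destruct (closure_parameters t ht hclose) as [ht0 hh].
  assert (hp23 : sqdist p2 p3 <> 0).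
  { destruct (sides_pos _ _ _ hcirc) as (hl & _). apply Rgt_not_eq, sqdist_pos_of_vnorm, hl. }
  pose proof (self_polar_product _ _ _ _ _ hp1 hp2 hp3 hp23 h12 h13 hclose hh) as hprod.
  pose proof (rR_of_chords_sq _ _ _ hp1 hp2 hp3 hcirc) as hsq.
  rewrite hprod, <- hrR in hsq.
  unfold billiard_r_over_R. rewrite <- ht0.
  rewrite <- (Rabs_pos_eq (r_over_R P1 P2 P3)) by exact (Rlt_le _ _ (r_over_R_pos _ _ _ nondeg)).
  apply Rsqr_eq_abs_0. rewrite !Rsqr_pow2, hsq. field.
Qed.

End Ellipse.

Theorem corollary1 (a b : R) (hb : 0 < b) (hab : b < a) :
  exists c1 c2 c3 : R,
    forall P1 P2 P3 J1 J2 J3 : pt,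
      billiard3 a b P1 P2 P3 ->
      excentral P1 P2 P3 J1 J2 J3 ->
      cos_angle P1 P2 P3 + cos_angle P2 P3 P1 + cos_angle P3 P1 P2 = c1 /\
      Rabs (cos_angle J1 J2 J3 * cos_angle J2 J3 J1 * cos_angle J3 J1 J2) = c2 /\
      tri_area J1 J2 J3 / tri_area P1 P2 P3 = c3.
Proof.
  exists (1 + billiard_r_over_R a b), (billiard_r_over_R a b / 4), (2 / billiard_r_over_R a b).
  intros P1 P2 P3 J1 J2 J3 hbil hex.
  assert (nondeg : nondegenerate P1 P2 P3) by apply hbil.
  rewrite <- (billiard3_r_over_R a b ltac:(lra) ltac:(lra) _ _ _ hbil).
  split; [|split].
  - exact (cos_angle_sum _ _ _ nondeg).
  - exact (excentral_cos_prod _ _ _ _ _ _ nondeg hex).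
  - exact (excentral_area_ratio _ _ _ _ _ _ nondeg hex).
Qed.
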